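(* Consider the lasso problem $\min_{\boldsymbol\beta\in\mathbb{R}^p}\frac{1}{2n}\|\mathbf{y}-\mathbf{X}\boldsymbol\beta\|^2+\lambda\|\boldsymbol\beta\|_1$ at a given $\lambda$, and suppose it is strictly convex, so that the sequence of iterates produced by an iterative algorithm $a(\cdot)$ (such as coordinate descent) converges to the unique global optimum $\widehat{\boldsymbol\beta}(\lambda)$. Then the algorithm $a(\cdot)$ combined with hybrid safe-strong rule (HSSR) screening converges to the same solution $\widehat{\boldsymbol\beta}(\lambda)$.
   Context: Here $\mathbf{y}\in\mathbb{R}^n$, $\mathbf{X}=(\mathbf{x}_1,\ldots,\mathbf{x}_p)\in\mathbb{R}^{n\times p}$, $\|\cdot\|$ is the Euclidean norm and $\|\cdot\|_1$ the $\ell_1$ norm. The lasso is solved over a decreasing sequence $\lambda_1>\lambda_2>\cdots>\lambda_K$, and $\widehat{\boldsymbol\beta}(\lambda_k)$ is the solution at $\lambda_k$, with residual $\mathbf{r}(\lambda_k)=\mathbf{y}-\mathbf{X}\widehat{\boldsymbol\beta}(\lambda_k)$. A safe rule is a screening rule that only discards features $j$ for which $\widehat{\beta}_j(\lambda_{k+1})=0$ is guaranteed; let $\mathcal{S}_{k+1}$ (the safe set) be the set of features not discarded by the safe rule at $\lambda_{k+1}$. The hybrid safe-strong rule (HSSR) discards feature $j$ at $\lambda_{k+1}$ if $j\in\mathcal{S}_{k+1}^c\cup\{j\in\mathcal{S}_{k+1}:|\mathbf{x}_j^T\mathbf{r}(\lambda_k)|/n<2\lambda_{k+1}-\lambda_k\}$.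 Running an algorithm with HSSR screening means: the algorithm is run only over the features not discarded by HSSR; after convergence, the KKT conditions of the lasso ($\mathbf{x}_j^T\mathbf{r}(\lambda)/n=\lambda\,\mathrm{sign}(\widehat\beta_j)$ if $\widehat\beta_j\neq0$, $|\mathbf{x}_j^T\mathbf{r}(\lambda)/n|\le\lambda$ if $\widehat\beta_j=0$) are checked for the features in the safe set that were discarded by the strong-rule part; any violating features are added back and the algorithm is rerun (warm-started), repeating until no violations occur. *)

From HB Require Import structures.
From mathcomp Require Import all_boot all_order all_algebra.
From mathcomp Require Import all_classical all_reals all_analysis.
Set Implicit Arguments. Unset Strict Implicit. Unset Printing Implicit Defensive.
Import Order.TTheory GRing.Theory Num.Theory.
Import numFieldNormedType.Exports.
Local Open Scope ring_scope.
Local Open Scope classical_set_scope.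

Section Lasso.
Variables (R : realType) (n p : nat).
Implicit Types (X : 'M[R]_(n, p)) (y : 'cV[R]_n) (b : 'cV[R]_p) (A : {set 'I_p}).

Definition xtr X (r : 'cV[R]_n) (j : 'I_p) : R := \sum_(i < n) X i j * r i 0.

Definition resid X y b : 'cV[R]_n := y - X *m b.

Definition lasso_obj X y (lam : R) b : R :=
  (\sum_(i < n) (resid X y b i 0) ^+ 2) / (2 * n%:R)
  + lam * \sum_(j < p) `|b j 0|.

Definition lasso_strictly_convex X y (lam : R) : Prop :=
  forall b1 b2 : 'cV[R]_p, b1 != b2 -> forall t : R, 0 < t < 1 ->
    lasso_obj X y lam (t *: b1 + (1 - t) *: b2)
    < t * lasso_obj X y lam b1 + (1 - t) * lasso_obj X y lam b2.

Definition supported_on A b : Prop := forall j, j \notin A -> b j 0 = 0.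

Definition restricted_strictly_convex X y (lam : R) A : Prop :=
  forall b1 b2 : 'cV[R]_p, supported_on A b1 -> supported_on A b2 ->
    b1 != b2 -> forall t : R, 0 < t < 1 ->
    lasso_obj X y lam (t *: b1 + (1 - t) *: b2)
    < t * lasso_obj X y lam b1 + (1 - t) * lasso_obj X y lam b2.

Definition lasso_solution X y (lam : R) b : Prop :=
  forall b', lasso_obj X y lam b <= lasso_obj X y lam b'.

Definition restricted_solution X y (lam : R) A b : Prop :=
  supported_on A b /\
  forall b', supported_on A b' -> lasso_obj X y lam b <= lasso_obj X y lam b'.

(* An iterative algorithm a(.): run over the features in A from the warm
   start b0, it produces the sequence of iterates  algo A b0 : nat -> 'cV_p. *)
Definition algorithm := {set 'I_p} -> 'cV[R]_p -> nat -> 'cV[R]_p.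

Definition converges_when_strictly_convex (a : algorithm) X y (lam : R) : Prop :=
  forall A b0, restricted_strictly_convex X y lam A ->
    exists2 bA, restricted_solution X y lam A bA & a A b0 @ \oo --> bA.

Definition kkt_ok X y (lam : R) b (j : 'I_p) : bool :=
  if b j 0 != 0 then xtr X (resid X y b) j / n%:R == lam * Num.sg (b j 0)
  else `|xtr X (resid X y b) j / n%:R| <= lam.

(* HSSR: features kept at lam_{k+1} = lam, given the safe set S and the
   previous solution bprev = betahat(lam_k) :
   j is discarded iff j \notin S or |x_j^T r(lam_k)|/n < 2 lam - lamk. *)
Definition hssr_kept X y (lam lamk : R) (bprev : 'cV[R]_p) (S : {set 'I_p})
  : {set 'I_p} :=
  [set j in S | ~~ (`|xtr X (resid X y bprev) j| / n%:R < 2 * lam - lamk)].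

(* KKT violators among the safe-set features not currently in the working
   set A (i.e. those discarded by the strong-rule part) *)
Definition kkt_violators X y (lam : R) (S A : {set 'I_p}) b : {set 'I_p} :=
  [set j in S :\: A | ~~ kkt_ok X y lam b j].

(* hssr_run a X y lam S A b out : running algorithm a with HSSR screening,
   starting from working set A and warm start b, converges and ends
   (no more KKT violations) with output out. *)
Inductive hssr_run (a : algorithm) X y (lam : R) (S : {set 'I_p})
  : {set 'I_p} -> 'cV[R]_p -> 'cV[R]_p -> Prop :=
| hssr_stop A b b' :
    a A b @ \oo --> b' ->
    kkt_violators X y lam S A b' = finset.set0 ->
    hssr_run a X y lam S A b b'
| hssr_rerun A b b' out :
    a A b @ \oo --> b' ->
    kkt_violators X y lam S A b' != finset.set0 ->
    hssr_run a X y lam S (A :|: kkt_violators X y lam S A b') b' out ->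
    hssr_run a X y lam S A b out.

End Lasso.

From HB Require Import structures.
From mathcomp Require Import all_boot all_order all_algebra.
From mathcomp Require Import all_classical all_reals all_analysis.
From mathcomp Require Import ring lra.
Set Implicit Arguments. Unset Strict Implicit. Unset Printing Implicit Defensive.
Import Order.TTheory GRing.Theory Num.Theory.
Import numFieldNormedType.Exports.
Local Open Scope ring_scope.
Local Open Scope classical_set_scope.

(* The screening loop terminates because every rerun adds a nonempty set of
   KKT violators to the working set.  When it stops, its output b is the limit
   of the algorithm on some working set A, hence the lasso solution restricted
   to A, and no feature of the safe set S violates the KKT conditions at b.
   Around b the objective splits as
     F(b + D) = F(b) + sum_j phi_j(D_j) + ||X D||^2 / (2n)
   with phi_j convex and phi_j(0) = 0.  For j in A, phi_j >= 0 since b is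
   optimal along coordinate j and the quadratic term is negligible for small
   steps; for j in S \ A, phi_j >= 0 by the KKT condition.  So b minimises F
   over the vectors supported on A u S, which contains the support of
   betahat(lam) by safety, and strict convexity forces b = betahat(lam). *)

Section CoordinateIncrement.
Variable R : realFieldType.
Implicit Types lam c o d t K : R.

(* phi_j above: [o] is b_j and [c] the scaled correlation x_j^T r(b) / n. *)
Definition lasso_incr lam c o d : R := - c * d + lam * (`|o + d| - `|o|).

Definition coord_kkt lam c o : bool :=
  if o != 0 then c == lam * Num.sg o else `|c| <= lam.

Lemma lasso_incr0 lam c o : lasso_incr lam c o 0 = 0.
Proof. by rewrite /lasso_incr addr0 subrr !mulr0 addr0. Qed.

Lemma lasso_incr_scale lam c o d t : 0 <= lam -> 0 <= t <= 1 ->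
  lasso_incr lam c o (t * d) <= t * lasso_incr lam c o d.
Proof.
move=> lam_ge0 /andP[t_ge0 t_le1].
have norm_conv : `|o + t * d| <= t * `|o + d| + (1 - t) * `|o|.
  have -> : o + t * d = t * (o + d) + (1 - t) * o by ring.
  apply: (le_trans (ler_normD _ _)).
  by rewrite !normrM (ger0_norm t_ge0) (ger0_norm (_ : 0 <= 1 - t)) ?subr_ge0.
have := ler_wpM2l lam_ge0 norm_conv.
rewrite /lasso_incr; lra.
Qed.

Lemma lasso_incr_ge0_quad lam c o K d : 0 <= lam -> 0 <= K ->
  (forall s, 0 <= lasso_incr lam c o s + K * s ^+ 2) -> 0 <= lasso_incr lam c o d.
Proof.
move=> lam_ge0 K_ge0 quad_ge0; rewrite leNgt; apply/negP => f_lt0.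
set f := lasso_incr lam c o d in f_lt0; set M := K * d ^+ 2.
have M_ge0 : 0 <= M by rewrite mulr_ge0 ?sqr_ge0.
(* for this step t d, the quadratic term t^2 M is at most half of -t f *)
set t := - f / (2 * (M - f)).
have t_gt0 : 0 < t by rewrite divr_gt0 //; lra.
have t_le1 : t <= 1 by rewrite ler_pdivrMr; lra.
have tM_small : t * M <= - f / 2.
  rewrite mulrAC ler_pdivrMr; last lra.
  have -> : - f / 2 * (2 * (M - f)) = - f * M + f * f by field.
  by have := sqr_ge0 f; rewrite expr2; lra.
have t_unit : 0 <= t <= 1 by rewrite (ltW t_gt0) t_le1.
have scaled := lasso_incr_scale c o d lam_ge0 t_unit; rewrite -/f in scaled.
have := quad_ge0 (t * d).
have -> : K * (t * d) ^+ 2 = t * (t * M) by rewrite /M; ring.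
have : t * (f + t * M) < 0 by rewrite pmulr_rlt0 //; lra.
lra.
Qed.

Lemma lasso_incr_ge0_kkt lam c o d : 0 <= lam -> coord_kkt lam c o ->
  0 <= lasso_incr lam c o d.
Proof.
move=> lam_ge0; rewrite /coord_kkt /lasso_incr.
have /andP[ge_od le_od] : - `|o + d| <= o + d <= `|o + d| by rewrite -ler_norml.
case: ifP => [/eqP o_neq0 /eqP -> | /negbFE /eqP -> c_le].
  case: (ltgtP o 0) o_neq0 => // o_sgn _.
    rewrite (ltr0_sg o_sgn) (ltr0_norm o_sgn).
    have : 0 <= lam * (`|o + d| + (o + d)) by rewrite mulr_ge0 //; lra.
    lra.
  rewrite (gtr0_sg o_sgn) (gtr0_norm o_sgn).
  have : 0 <= lam * (`|o + d| - (o + d)) by rewrite mulr_ge0 // subr_ge0.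
  lra.
rewrite add0r normr0 subr0 mulNr addrC subr_ge0.
by rewrite (le_trans (ler_norm _)) // normrM ler_wpM2r.
Qed.

End CoordinateIncrement.

Section LassoObjective.
Variables (R : realType) (n p : nat) (X : 'M[R]_(n, p)) (y : 'cV[R]_n) (lam : R).
Hypotheses (n_gt0 : (0 < n)%N) (lam_ge0 : 0 <= lam).
Implicit Types (A B : {set 'I_p}) (b D : 'cV[R]_p).

Local Notation corr b j := (xtr X (resid X y b) j / n%:R).

Lemma kkt_okE b j : kkt_ok X y lam b j = coord_kkt lam (corr b j) (b j 0).
Proof. by []. Qed.

Lemma lasso_obj_expand b D :
  lasso_obj X y lam (b + D) = lasso_obj X y lam b
    + \sum_(j < p) lasso_incr lam (corr b j) (b j 0) (D j 0)
    + (\sum_(i < n) (X *m D) i 0 ^+ 2) / (2 * n%:R).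
Proof.
have n_neq0 : n%:R != 0 :> R by rewrite pnatr_eq0 -lt0n.
set r := resid X y b.
have sq_expand : \sum_(i < n) resid X y (b + D) i 0 ^+ 2 =
    \sum_(i < n) r i 0 ^+ 2 - 2 * \sum_(i < n) r i 0 * (X *m D) i 0
    + \sum_(i < n) (X *m D) i 0 ^+ 2.
  rewrite mulr_sumr -sumrB -big_split /=; apply: eq_bigr => i _.
  rewrite /r /resid mulmxDr opprD addrA !mxE; ring.
have cross_xtr : \sum_(i < n) r i 0 * (X *m D) i 0 = \sum_(j < p) xtr X r j * D j 0.
  under eq_bigr do rewrite [(X *m D) _ _]mxE mulr_sumr.
  rewrite exchange_big /=; apply: eq_bigr => j _.
  by rewrite /xtr mulr_suml; apply: eq_bigr => i _; ring.
have incr_sum : \sum_(j < p) lasso_incr lam (xtr X r j / n%:R) (b j 0) (D j 0) =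
    - (\sum_(j < p) xtr X r j * D j 0) / n%:R
    + lam * (\sum_(j < p) `|(b + D) j 0| - \sum_(j < p) `|b j 0|).
  rewrite -sumrB mulr_sumr -sumrN mulr_suml -big_split /=.
  by apply: eq_bigr => j _; rewrite /lasso_incr !mxE; field.
by rewrite /lasso_obj -/r sq_expand cross_xtr incr_sum; field.
Qed.

Lemma lasso_obj_coord b j s :
  lasso_obj X y lam (b + s *: delta_mx j 0) = lasso_obj X y lam b
    + lasso_incr lam (corr b j) (b j 0) s
    + (\sum_(i < n) X i j ^+ 2) / (2 * n%:R) * s ^+ 2.
Proof.
rewrite lasso_obj_expand (bigD1 j) //= big1 => [|k /negbTE k_neq_j]; last first.
  by rewrite !mxE k_neq_j mulr0 lasso_incr0.
have -> : \sum_(i < n) (X *m (s *: delta_mx j 0 : 'cV_p)) i 0 ^+ 2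
    = s ^+ 2 * \sum_(i < n) X i j ^+ 2.
  by rewrite mulr_sumr; apply: eq_bigr => i _; rewrite -scalemxAr -colE !mxE exprMn.
by rewrite !mxE !eqxx /= mulr1 addr0; ring.
Qed.

Lemma restricted_solution_incr_ge0 A b j d : restricted_solution X y lam A b ->
  j \in A -> 0 <= lasso_incr lam (corr b j) (b j 0) d.
Proof.
move=> [b_supp b_min] jA.
set K := (\sum_(i < n) X i j ^+ 2) / (2 * n%:R).
have K_ge0 : 0 <= K.
  by rewrite divr_ge0 ?mulr_ge0 ?ler0n // sumr_ge0 // => i _; rewrite sqr_ge0.
apply: (lasso_incr_ge0_quad _ lam_ge0 K_ge0) => s.
have step_supp : supported_on A (b + s *: delta_mx j 0).
  move=> k kA; have /negbTE k_neq_j : k != j by apply: contraNneq kA => ->.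
  by rewrite !mxE b_supp // k_neq_j mulr0 addr0.
by have := b_min _ step_supp; rewrite lasso_obj_coord -/K; lra.
Qed.

Lemma restricted_solution_kkt S A b : restricted_solution X y lam A b ->
  kkt_violators X y lam S A b = finset.set0 -> restricted_solution X y lam (A :|: S) b.
Proof.
move=> b_sol no_viol; have [b_supp _] := b_sol.
split=> [k | b' b'_supp]; first by rewrite inE negb_or => /andP[/b_supp].
have -> : b' = b + (b' - b) by rewrite addrC subrK.
rewrite lasso_obj_expand -addrA lerDl addr_ge0 //.
  apply: sumr_ge0 => j _.
  have [jA | jA] := boolP (j \in A); first exact: restricted_solution_incr_ge0 b_sol jA.
  have [jS | jS] := boolP (j \in S).
    apply: lasso_incr_ge0_kkt lam_ge0 _; rewrite -kkt_okE.
    have : j \notin kkt_violators X y lam S A b by rewrite no_viol inE.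
    by rewrite !inE jS jA negbK.
  by rewrite !mxE b'_supp ?inE ?negb_or ?jA ?jS // b_supp // subrr lasso_incr0.
by rewrite divr_ge0 ?mulr_ge0 ?ler0n // sumr_ge0 // => i _; rewrite sqr_ge0.
Qed.

Lemma restricted_solution_eq_solution B b bhat :
  lasso_strictly_convex X y lam -> lasso_solution X y lam bhat ->
  supported_on B bhat -> restricted_solution X y lam B b -> b = bhat.
Proof.
move=> convex bhat_min bhat_supp [_ b_min].
apply/eqP; apply: contraT => b_neq.
have half : 0 < (2^-1 : R) < 1 by rewrite invr_gt0 ltr0n invf_lt1 ?ltr0n ?ltr1n.
have := convex _ _ b_neq _ half.
have := bhat_min (2^-1 *: b + (1 - 2^-1) *: bhat).
have := b_min _ bhat_supp.
lra.
Qed.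

End LassoObjective.

Section Screening.
Variables (R : realType) (n p : nat) (a : algorithm R p).
Variables (X : 'M[R]_(n, p)) (y : 'cV[R]_n) (lam : R) (S : {set 'I_p}).

Local Notation violators := (kkt_violators X y lam S).

Lemma kkt_violators_proper A b : violators A b != finset.set0 ->
  A \proper A :|: violators A b.
Proof.
case/set0Pn=> j j_viol; rewrite properUl //; apply/subsetPn; exists j => //.
by move: j_viol; rewrite !inE => /andP[/andP[]].
Qed.

Lemma hssr_run_exists : (forall A b, exists l : 'cV[R]_p, a A b @ \oo --> l) ->
  forall A b, exists out, hssr_run a X y lam S A b out.
Proof.
move=> a_cvg A; have [k] := ubnP #|~: A|; elim: k A => // k IH A A_small b.
have [l a_to_l] := a_cvg A b.
have [no_viol | viol] := eqVneq (violators A l) finset.set0.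
  by exists l; apply: hssr_stop.
have [|out run] := IH (A :|: violators A l) _ l.
  by rewrite -ltnS (leq_trans _ A_small) // ltnS proper_card // properC kkt_violators_proper.
by exists out; apply: hssr_rerun run.
Qed.

Lemma hssr_run_final A b out : hssr_run a X y lam S A b out ->
  exists A' b', a A' b' @ \oo --> out /\ violators A' out = finset.set0.
Proof. by elim=> [A' b' ? a_to_out no_viol | *] //; exists A', b'. Qed.

End Screening.

Theorem theorem3p1 (R : realType) (n p : nat) (X : 'M[R]_(n, p)) (y : 'cV[R]_n)
  (lamk lam : R) (bprev bhat : 'cV[R]_p) (S : {set 'I_p}) (a : algorithm R p) :
  (0 < n)%N -> 0 < lam -> lam < lamk ->
  (* bprev = betahat(lam_k), the solution at the previous lambda *)
  lasso_solution X y lamk bprev ->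
  (* the lasso at lam = lam_{k+1} is strictly convex, with optimum bhat *)
  lasso_strictly_convex X y lam ->
  lasso_solution X y lam bhat ->
  (* the algorithm converges to the optimum of the strictly convex problems *)
  converges_when_strictly_convex a X y lam ->
  (* S is the safe set of a safe rule at lam *)
  (forall j, j \notin S -> bhat j 0 = 0) ->
  (* the algorithm with HSSR screening (warm-started at betahat(lam_k))
     converges, and any output it produces is bhat *)
  (exists out, hssr_run a X y lam S (hssr_kept X y lam lamk bprev S) bprev out) /\
  (forall out, hssr_run a X y lam S (hssr_kept X y lam lamk bprev S) bprev out ->
     out = bhat).
Proof.
(* HSSR only chooses the initial working set. *)
move=> n_gt0 lam_gt0 _ _ convex bhat_min a_cvg bhat_safe.
have a_sol A b : exists2 bA, restricted_solution X y lam A bA & a A b @ \oo --> bA.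
  by apply: a_cvg => b1 b2 _ _; exact: convex.
split.
  apply: hssr_run_exists => A b.
  by have [bA _ a_to_bA] := a_sol A b; exists bA.
move=> out /hssr_run_final[A [b [a_to_out no_viol]]].
have [bA bA_sol a_to_bA] := a_sol A b.
have out_eq : out = bA by exact: cvg_unique _ a_to_out a_to_bA.
apply: (restricted_solution_eq_solution convex bhat_min (B := A :|: S)).
  by move=> j; rewrite inE negb_or => /andP[_ /bhat_safe].
rewrite out_eq in no_viol *.
exact: (restricted_solution_kkt n_gt0 (ltW lam_gt0) bA_sol no_viol).
Qed.
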